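(* Let $(n_i)_{i\ge1}$ be positive integers with $n_i\mid n_j$ for all $i\le j$ and $n_j\to\infty$, let $X=\varprojlim \mathbb{Z}/n_i\mathbb{Z}$ and let $T:X\to X$ be the odometer map $T((x_i+n_i\mathbb{Z})_i)=(x_i+1+n_i\mathbb{Z})_i$. Let $p$ be a prime. Then the following are equivalent: (1) for every continuous map $f:X\to\mathbb{Z}/p\mathbb{Z}$ there is a continuous map $L:X\to\mathbb{Z}/p\mathbb{Z}$ with $f(x)=L(Tx)-L(x)$ for all $x\in X$ (i.e. the cocycle determined by $c(1,x)=f(x)$ is a coboundary); (2) $\sup_i \operatorname{ord}(p,n_i)=\infty$, where $\operatorname{ord}(p,n)=\max\{k\ge 0: p^k\mid n\}$.
   Context: $\varprojlim \mathbb{Z}/n_i\mathbb{Z}=\{(x_i+n_i\mathbb{Z})_{i\ge1}\in\prod_i\mathbb{Z}/n_i\mathbb{Z}: n_i\mid (x_{i+1}-x_i)\ \forall i\}$ with the product topology. *)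

From HB Require Import structures.
From mathcomp Require Import all_boot all_order all_algebra.
From mathcomp Require Import all_classical all_reals all_analysis.
Set Implicit Arguments. Unset Strict Implicit. Unset Printing Implicit Defensive.
Local Open Scope classical_set_scope.

(* The inverse limit X = lim_<- Z/n_i Z is realised as a subspace of the
   product  prod_i Z/n_i Z, where the i-th factor Z/n_i Z (discrete) is
   represented by its canonical representatives {0,...,n_i - 1} inside the
   discrete space nat.  Indices start at 0 (paper: at 1). *)

Definition ambient : topologicalType := prod_topology (fun _ : nat => nat).

Definition invlim_set (n : nat -> nat) : set ambient :=
  [set x | forall i, (x i < n i)%N /\ x i.+1 = x i %[mod n i]].

Definition invlim (n : nat -> nat) : topologicalType :=
  set_type (invlim_set n).

(* the odometer x |-> (x_i + 1 mod n_i)_i ; the fallback branch is never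
   used when n_i > 0 and n_i | n_{i+1} (then the image lies in X). *)
Definition odometer (n : nat -> nat) (x : invlim n) : invlim n :=
  let y : ambient := fun i => ((sval x i).+1 %% n i)%N in
  match pselect (y \in invlim_set n) with
  | left h => exist _ y h
  | right _ => x
  end.

Definition Zp_disc (p : nat) : topologicalType := discrete_topology 'Z_p.

From HB Require Import structures.
From mathcomp Require Import all_boot all_order all_algebra.
From mathcomp Require Import all_classical all_reals all_analysis.
Import GRing.Theory.
Local Open Scope classical_set_scope.

(* Two
   topological facts drive the proof: a continuous map from X to a discrete
   space is locally a function of one coordinate (the product topology), and
   by compactness of X (Tychonoff) it is globally a function of one
   coordinate x_N.
   (2) -> (1): if f depends only on x_N, choose M >= N with p | n_M / n_N
   and put L(x) = sum_{k < x_M} f(k).  The partial sums of the n_N-periodic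
   sequence f(k) are n_M-periodic because the sum over a period n_M is
   (n_M / n_N) times the sum over a period n_N, hence 0 mod p; so
   L(Tx) - L(x) = f(x).
   (1) -> (2): if ord(p, n_i) is bounded, it is maximal at some j, so
   p never divides n_l / n_j for l >= j.  But if the indicator of
   [x_j = 0] were the coboundary of L, telescoping along the orbit of 0
   gives L(n_l) = L(0) + n_l / n_j in Z/pZ, while L(n_l) = L(0) as soon as
   l is beyond the coordinate determining L near 0: a contradiction. *)

Section Arithmetic.
Local Open Scope ring_scope.

Lemma Zp_natr_eq0 {p m : nat} : (1 < p)%N -> ((m%:R : 'Z_p) = 0) <-> (p %| m)%N.
Proof.
move=> p_gt1; rewrite /dvdn -(val_Zp_nat p_gt1).
by split=> [->|/eqP m0]; [|apply: val_inj; rewrite /= m0].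
Qed.

Lemma sum_periodic {V : nmodType} {G : nat -> V} {d : nat} :
  (forall k, G (d + k)%N = G k) ->
  forall a m, \sum_(0 <= k < a * d + m) G k
            = (\sum_(0 <= k < d) G k) *+ a + \sum_(0 <= k < m) G k.
Proof.
move=> Gper; elim=> [|a IH] m; first by rewrite mul0n add0n add0r.
rewrite mulSnr -addnA IH (big_cat_nat (leq0n d) (leq_addr m d)) /=.
have shift : \sum_(d <= k < d + m) G k = \sum_(0 <= k < m) G k.
  rewrite -{1}[d]add0n big_addn.
  by rewrite addKn; apply: eq_bigr => k _; rewrite addnC Gper.
by rewrite shift addrA mulrSr.
Qed.

Lemma coboundary_telescope {X : Type} {V : zmodType} {T : X -> X} {f L : X -> V} :
  (forall x, f x = L (T x) - L x) ->
  forall k x, L (iter k T x) = L x + \sum_(0 <= i < k) f (iter i T x).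
Proof.
move=> cob; elim=> [|k IH] x; first by rewrite big_geq // addr0.
by rewrite big_nat_recr //= addrA -IH cob addrC subrK.
Qed.

Lemma dvdn_div_logn (p d m : nat) : prime p -> (0 < m)%N -> (d %| m)%N ->
  (p %| m %/ d)%N = (logn p d < logn p m)%N.
Proof.
move=> p_pr m_gt0 dm; have [q def_m] := dvdnP dm.
have [q_gt0 d_gt0] : (0 < q)%N /\ (0 < d)%N by apply/andP; rewrite -muln_gt0 -def_m.
rewrite def_m mulnK // lognM // -{1}[logn p d]add0n ltn_add2r logn_gt0.
by rewrite mem_primes p_pr q_gt0.
Qed.

Lemma bounded_max (a : nat -> nat) (k : nat) :
  (forall i, (a i < k)%N) -> exists j, forall i, (a i <= a j)%N.
Proof.
elim: k => [|k IH] a_lt; first by have := a_lt 0.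
have [[j ajk]|no_k] := pselect (exists j, a j = k).
  by exists j => i; rewrite ajk -ltnS.
apply: IH => i; rewrite ltn_neqAle -ltnS a_lt andbT.
by apply/eqP => aik; apply: no_k; exists i.
Qed.

End Arithmetic.

Section InverseLimit.
Context {n : nat -> nat}.
Hypothesis n_pos : forall i, (0 < n i)%N.
Hypothesis n_dvd : forall i j, (i <= j)%N -> (n i %| n j)%N.

Lemma invlimP (x : invlim n) : invlim_set n (sval x).
Proof. exact: set_mem (valP x). Qed.

Lemma coord_lt (x : invlim n) i : (sval x i < n i)%N.
Proof. by case: (invlimP x i). Qed.

Lemma coord_mod (x : invlim n) {i j : nat} :
  (i <= j)%N -> sval x i = (sval x j %% n i)%N.
Proof.
elim: j => [|j IH]; first by rewrite leqn0 => /eqP ->; rewrite modn_small ?coord_lt.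
rewrite leq_eqVlt => /orP [/eqP <-|]; first by rewrite modn_small ?coord_lt.
rewrite ltnS => ij; rewrite IH // -(modn_small (coord_lt x j)).
by case: (invlimP x j) => _ <-; rewrite modn_dvdm ?n_dvd.
Qed.

Lemma residue_in r : (fun i => (r %% n i)%N) \in invlim_set n.
Proof.
apply/mem_set => i; split; first by rewrite ltn_pmod.
by rewrite modn_dvdm ?n_dvd // modn_mod.
Qed.

Definition residue r : invlim n :=
  exist (fun x => x \in invlim_set n) _ (residue_in r).

Lemma odometerE (x : invlim n) :
  sval (odometer x) = (fun i => ((sval x i).+1 %% n i)%N).
Proof.
rewrite /odometer; case: pselect => // -[]; apply/mem_set => i.
split; first by rewrite ltn_pmod.
have [_ xi] := invlimP x i.
by rewrite modn_dvdm ?n_dvd // modn_mod -addn1 -modnDml xi modnDml addn1.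
Qed.

Lemma odometer_residue r : odometer (residue r) = residue r.+1.
Proof.
apply: val_inj; rewrite /= odometerE; apply: funext => i /=.
by rewrite -addn1 modnDml addn1.
Qed.

Lemma iter_odometer r : iter r (@odometer n) (residue 0) = residue r.
Proof. by elim: r => [|r /= ->]; [apply: val_inj|rewrite odometer_residue]. Qed.

Lemma continuous_coord (Y : topologicalType) (h : nat -> Y) j :
  continuous (fun x : invlim n => h (sval x j)).
Proof.
move=> x; apply: continuous_comp; last first.
  move=> U hU; apply: open_nbhs_nbhs; split; first exact: discrete_open.
  exact: nbhs_singleton hU.
apply: (@continuous_comp _ _ _ (fun x : invlim n => sval x : ambient) (fun y : ambient => y j)).
  exact: initial_continuous.
exact: proj_continuous.
Qed.

(* A map to a discrete space continuous at z is, near z, a function of one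
   coordinate; otherwise points agreeing with z on ever later coordinates
   would converge to z with values different from the value at z. *)
Lemma continuous_locally_coord {Y : discreteTopologicalType} {g : invlim n -> Y} {z} :
  {for z, continuous g} -> exists j, forall y, sval y j = sval z j -> g y = g z.
Proof.
move=> gz; apply: contrapT => nolevel.
have /choice [y yP] : forall j, exists y, sval y j = sval z j /\ g y <> g z.
  move=> j; apply: contrapT => hj; apply: nolevel; exists j => y yj.
  by apply: contrapT => gyz; apply: hj; exists y.
have y_cvg : (fun j => sval (y j) : ambient) @ \oo --> (sval z : ambient).
  apply/pointwise_cvgP => t.
  apply: (@cvg_near_cst _ _ _ (fun j : nat => sval (y j) t) \oo); near=> j.
  have tj : (t <= j)%N by near: j; exact: nbhs_infty_ge.
  by rewrite (coord_mod (y j) tj) (coord_mod z tj) (yP j).1.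
have [_ [[V oV <-] Vz] Vg] := gz _ (discrete_set1 (g z)).
have yV : \forall j \near \oo, V (sval (y j)).
  exact: y_cvg (open_nbhs_nbhs (conj oV Vz)).
have [j /Vg] := filter_ex yV.
exact: (yP j).2.
Unshelve. all: by end_near.
Qed.

Lemma coord_nbhs (x : ambient) j : nbhs x [set y : ambient | y j = x j].
Proof. exact: (@proj_continuous nat (fun=> nat) j x _ (discrete_set1 (x j))). Qed.

Lemma invlim_set_closed : closed (invlim_set n).
Proof.
move=> x clx i.
have [y [yX [yi yi1]]] := clx _ (filterI (coord_nbhs x i) (coord_nbhs x i.+1)).
by rewrite -yi -yi1; exact: yX.
Qed.

(* X is a closed subset of the compact box prod_i [0, n_i). *)
Lemma invlim_set_compact : compact (invlim_set n).
Proof.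
have box_compact := tychonoff (fun i => finite_compact (finite_II (n i))).
apply: (subclosed_compact invlim_set_closed box_compact).
by move=> x xX i; case: (xX i).
Qed.


(* By compactness, a continuous map from X to a discrete space is a function
   of a single coordinate x_N. *)
Lemma continuous_uniform_coord {Y : discreteTopologicalType} {g : invlim n -> Y} :
  continuous g -> exists N, forall x y, sval x N = sval y N -> g x = g y.
Proof.
move=> cg.
pose agree N (x : ambient) := forall y y' : invlim n,
  sval y N = x N -> sval y' N = x N -> g y = g y'.
suff /filter_ex [N agreeN] : \forall N \near \oo, invlim_set n `<=` agree N.
  by exists N => x y xy; exact: agreeN _ (invlimP x) x y erefl (esym xy).
have := (compact_near_coveringP _).1 invlim_set_compact.
move=> /near_covering_withinP; apply => x xX.
pose z := exist (fun x => x \in invlim_set n) x (mem_set xX).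
have [j zj] := continuous_locally_coord (cg z).
exists ([set x' : ambient | x' j = x j], [set N | (j <= N)%N]).
  by split; [exact: coord_nbhs | exact: nbhs_infty_ge].
move=> [x' N] [/= x'j jN] x'X y y' yN y'N.
have x'jN := coord_mod (exist (fun x => x \in invlim_set n) x' (mem_set x'X)) jN.
have agree_j (w : invlim n) : sval w N = x' N -> sval w j = sval z j.
  by move=> wN; rewrite (coord_mod w jN) wN -x'jN /= x'j.
by rewrite (zj y (agree_j y yN)) (zj y' (agree_j y' y'N)).
Qed.

Section Coboundaries.
Context {p : nat}.
Hypothesis p_gt1 : (1 < p)%N.
Local Open Scope ring_scope.

(* (2) -> (1) for a cocycle depending on x_N only: it is the coboundary of
   L(x) = sum_{k < x_M} f(k) whenever p | n_M / n_N. *)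
Lemma coboundary_of_coord {N M : nat} {f : invlim n -> Zp_disc p} :
  (N <= M)%N -> (p %| n M %/ n N)%N ->
  (forall x y, sval x N = sval y N -> f x = f y) ->
  exists L : invlim n -> Zp_disc p, continuous L /\
    forall x, (f x : 'Z_p) = (L (odometer x) : 'Z_p) - L x.
Proof.
move=> NM p_dvd fN; have nNM := n_dvd _ _ NM.
pose G k : 'Z_p := f (residue k).
have G_mod k k' : (k = k' %[mod n N])%N -> G k = G k' by move=> kk'; apply: fN.
have G_per d : (n N %| d)%N -> forall k, G (d + k)%N = G k.
  by move=> nNd k; apply: G_mod; rewrite -modnDml (eqP nNd).
pose h m : 'Z_p := \sum_(0 <= k < m) G k.
have h_nM : h (n M) = 0.
  rewrite /h -[n M](addn0) -(divnK nNM) (sum_periodic (G_per _ (dvdnn _))).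
  rewrite (big_geq (leqnn 0)) addr0.
  by rewrite -mulr_natr (Zp_natr_eq0 p_gt1).2 // mulr0.
have h_mod m : h (m %% n M)%N = h m.
  rewrite {2}(divn_eq m (n M)) /h (sum_periodic (G_per _ nNM)).
  by rewrite -/(h (n M)) h_nM mul0rn add0r.
exists (fun x => h (sval x M)); split; first exact: continuous_coord.
move=> x; rewrite odometerE h_mod /h big_nat_recr //= addrC addrK.
by apply: fN; rewrite /= -coord_mod.
Qed.

Lemma coboundary_indicator_dvd {j : nat} {L : invlim n -> Zp_disc p} :
  continuous L ->
  (forall x, ((sval x j == 0)%:R : 'Z_p) = (L (odometer x) : 'Z_p) - L x) ->
  exists l, (j <= l)%N /\ (p %| n l %/ n j)%N.
Proof.
move=> cL cob; pose G k : 'Z_p := (n j %| k)%:R.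
have [m Lm] := continuous_locally_coord (cL (residue 0)).
have L_res k : L (residue k) = L (residue 0) + \sum_(0 <= i < k) G i.
  rewrite -iter_odometer (coboundary_telescope cob); congr (_ + _).
  by apply: eq_bigr => i _; rewrite iter_odometer.
have G_per k : G (n j + k)%N = G k by rewrite /G dvdn_addr.
have G_period : \sum_(0 <= i < n j) G i = 1.
  rewrite big_ltn // /G dvdn0 big1_seq ?addr0 // => i; rewrite mem_index_iota.
  by move=> /andP [_ /andP [i_gt0 i_lt]]; rewrite gtnNdvd.
pose l := maxn m j; exists l; split; first exact: leq_maxr.
have nj_l : (n j %| n l)%N by apply: n_dvd; exact: leq_maxr.
have L_nl : L (residue (n l)) = L (residue 0).
  by apply: Lm; rewrite /= mod0n; apply/eqP; apply: n_dvd; exact: leq_maxl.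
have sum_nl : \sum_(0 <= i < n l) G i = (n l %/ n j)%:R.
  set q := (n l %/ n j)%N; rewrite -[n l]addn0 -(divnK nj_l) -/q.
  by rewrite (sum_periodic G_per) G_period (big_geq (leqnn 0)) addr0.
apply/(Zp_natr_eq0 p_gt1); apply: (@addrI _ (L (residue 0) : 'Z_p)).
by rewrite -sum_nl -L_res L_nl addr0.
Qed.

End Coboundaries.
End InverseLimit.

Local Open Scope ring_scope.

(* The main equivalence. *)
Theorem proposition3p4 (n : nat -> nat) (p : nat)
  (n_pos : forall i, (0 < n i)%N)
  (n_dvd : forall i j, (i <= j)%N -> (n i %| n j)%N)
  (n_infty : forall M : nat, exists N : nat, forall j, (N <= j)%N -> (M <= n j)%N)
  (p_prime : prime p) :
  (forall f : invlim n -> Zp_disc p, continuous f ->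
     exists L : invlim n -> Zp_disc p, continuous L /\
       forall x : invlim n,
         (f x : 'Z_p) = (L (odometer x) : 'Z_p) - (L x : 'Z_p))
  <-> (forall k : nat, exists i : nat, (k <= logn p (n i))%N).
Proof.
have p_gt1 := prime_gt1 p_prime.
have div_logn i j : (i <= j)%N -> (p %| n j %/ n i)%N = (logn p (n i) < logn p (n j))%N.
  by move=> ij; rewrite dvdn_div_logn ?n_dvd.
split=> [coboundary | unbounded].
- apply: contrapT => /existsNP [k /forallNP bounded].
  have [j j_max] : exists j, forall i, (logn p (n i) <= logn p (n j))%N.
    by apply: (@bounded_max _ k) => i; rewrite ltnNge; apply/negP => /(bounded i).
  have indicator_cont := @continuous_coord n (Zp_disc p) (fun m => (m == 0)%:R) j.
  have [L [cL cob]] := coboundary _ indicator_cont.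
  have [l [jl]] := coboundary_indicator_dvd n_pos n_dvd p_gt1 cL cob.
  by rewrite div_logn // ltnNge j_max.
- move=> f cf; have [N fN] := continuous_uniform_coord n_dvd cf.
  have [i val_i] := unbounded (logn p (n N)).+1.
  have NM : (N <= maxn i N)%N := leq_maxr i N.
  apply: (coboundary_of_coord n_pos n_dvd p_gt1 NM _ fN).
  rewrite div_logn //; apply: leq_trans val_i _.
  by apply: dvdn_leq_log => //; apply: n_dvd; exact: leq_maxl.
Qed.
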